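(* Let $(\mathcal{L},[\,,\,])$ be a Lie algebra over $\mathbf{k}$ with basis $X=\{x_j:j\in J\}$ where $J$ is totally ordered, let $k\in\mathbf{k}$ be nonzero, and let $\hat A$, $\hat q$, $\hat x_j$, $R$ be as constructed below. Then every element of $\hat A$ is congruent modulo $R$ to a $\mathbf{k}$-linear combination of model monomials, where the model monomials are: (a) $\hat q\hat x_{j_1}\cdots\hat x_{j_m}$ with $m\ge0$, $j_1\le\cdots\le j_m$; (b) $\hat x_{i_1}\cdots\hat x_{i_t}\hat x_{j_0}\hat q\hat x_{j_1}\cdots\hat x_{j_m}$ with $t,m\ge0$, $i_1\le\cdots\le i_t$, $j_0\le j_1\le\cdots\le j_m$; (c) $\hat x_{j_1}\cdots\hat x_{j_m}$ with $m\ge0$, $j_1\le\cdots\le j_m$ (empty products being $\hat 1$).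
   Context: Construction: $\tilde q\notin X$ a symbol, $V$ the $\mathbf{k}$-vector space with basis $X\cup\{\tilde q\}$, $T(V)$ its tensor algebra, $I$ the two-sided ideal generated by $\tilde q\otimes\tilde q-\tilde q$ and all $\tilde q\otimes a\otimes\tilde q-\tilde q\otimes a$ ($a\in T(V)$), $\hat A=T(V)/I$, $\hat q=\tilde q+I$, $\hat 1=1+I$, $\hat x_j=x_j+I$, and $x\mapsto\hat x$ the linear extension to $\mathcal{L}$. $R$ is the two-sided ideal of $\hat A$ generated by all $\widehat{[x,y]}-\hat x\hat y+\hat y\hat x+\hat x\hat y\hat q-\hat y\hat x\hat q-k\hat x\hat q\hat y+k\hat y\hat q\hat x$, $x,y\in\mathcal{L}$. *)

From HB Require Import structures.
From mathcomp Require Import all_boot all_order all_algebra.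
Set Implicit Arguments. Unset Strict Implicit. Unset Printing Implicit Defensive.
Import Order.TTheory GRing.Theory.
Local Open Scope ring_scope.

Record is_lie_bracket (K : fieldType) (L : lmodType K) (br : L -> L -> L) : Prop := {
  lie_linl : forall (a : K) (x y z : L), br (a *: x + y) z = a *: br x z + br y z;
  lie_linr : forall (a : K) (x y z : L), br z (a *: x + y) = a *: br z x + br z y;
  lie_alt  : forall x : L, br x x = 0;
  lie_jacobi : forall x y z : L, br x (br y z) + br y (br z x) + br z (br x y) = 0
}.

Definition lincomb (K : fieldType) (L : lmodType K) (J : Type) (x : J -> L)
  (s : seq (K * J)) : L := \sum_(p <- s) p.1 *: x p.2.

Definition is_basis (K : fieldType) (L : lmodType K) (J : eqType) (x : J -> L) : Prop :=
  (forall s : seq (K * J), uniq (map snd s) -> lincomb x s = 0 ->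
       forall p, p \in s -> p.1 = 0)
  /\ (forall y : L, exists s : seq (K * J), y = lincomb x s).

(* Alphabet: [option J]; [Some j] stands for x_j and [None] for q~.
   An element of T(V) is represented by a formal finite sum
   sum_{(c,w) in p} c.w of words w; two representations denote the same
   element iff they have the same coefficients ([coef]). *)

Definition tpoly (K : fieldType) (A : Type) := seq (K * seq A).

Section TPoly.
Variables (K : fieldType) (A : eqType).
Implicit Types (p q : tpoly K A) (w : seq A).

Definition coef p w : K := \sum_(cw <- p) (if cw.2 == w then cw.1 else 0).
Definition tword w : tpoly K A := [:: (1, w)].
Definition tone : tpoly K A := tword [::].
Definition tadd p q : tpoly K A := p ++ q.
Definition tscale (c : K) p : tpoly K A := [seq (c * cw.1, cw.2) | cw <- p].
Definition tsub p q : tpoly K A := p ++ tscale (-1) q.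
Definition tmul p q : tpoly K A :=
  [seq (a.1 * b.1, a.2 ++ b.2) | a <- p, b <- q].

(* two-sided ideal of T(V) generated by the set G:
   p is (coefficientwise) a finite sum of terms c . u g v, u,v words, g in G *)
Definition in_ideal (G : tpoly K A -> Prop) p : Prop :=
  exists s : seq (K * seq A * tpoly K A * seq A),
    {in s, forall t, G t.1.2} /\
    coef p =1 coef (flatten
       [seq tmul (tmul (tscale t.1.1.1 (tword t.1.1.2)) t.1.2) (tword t.2) | t <- s]).
End TPoly.

Section Construction.
Variables (K : fieldType) (d : Order.disp_t) (J : orderType d).
Local Notation A := (option J).
Definition qt : tpoly K A := @tword K A [:: None].
Definition xt (j : J) : tpoly K A := @tword K A [:: Some j].

Definition I_gens (g : tpoly K A) : Prop :=
  g = tsub (tmul qt qt) qt \/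
  exists a : tpoly K A, g = tsub (tmul (tmul qt a) qt) (tmul qt a).

(* lifts to T(V) of the generators of R, for hat : L -> T(V) the linear
   extension of x_j |-> x_j *)
Definition R_gens (L : lmodType K) (br : L -> L -> L) (hat : L -> tpoly K A)
  (kappa : K) (g : tpoly K A) : Prop :=
  exists x y : L,
    let X := hat x in let Y := hat y in
    g = tadd (tadd (tadd (tadd (tadd (tadd
          (hat (br x y))
          (tscale (-1) (tmul X Y)))
          (tmul Y X))
          (tmul (tmul X Y) qt))
          (tscale (-1) (tmul (tmul Y X) qt)))
          (tscale (- kappa) (tmul (tmul X qt) Y)))
          (tscale kappa (tmul (tmul Y qt) X)).

Definition jsorted (s : seq J) : bool := sorted (@Order.le d J) s.

Definition model_word (w : seq A) : Prop :=
  (exists s, jsorted s /\ w = None :: map Some s)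
  \/ (exists s1 j0 s2, jsorted s1 /\ jsorted (j0 :: s2) /\
        w = map Some s1 ++ Some j0 :: None :: map Some s2)
  \/ (exists s, jsorted s /\ w = map Some s).
End Construction.

(* The proof is a
   straightening algorithm on words:
   - generic facts on coefficients, contexts u _ v, ideals and congruence;
   - sorting by adjacent transpositions ([sort_by_swaps]);
   - the rewriting rules: q a q = q a ([q_absorb]), and, from the relation
     of R for two basis vectors, [swap_across_q], [swap_letters] and
     [swap_after_q], each trading a transposition for shorter words or
     words containing q;
   - words containing q are reducible, by induction on the length and then
     on the position of the first q ([reducible_q_word]); q-free words are
     reduced by sorting, their correction terms being shorter or containing
     q ([reducible_q_free]); linearity concludes. *)

From HB Require Import structures.
From mathcomp Require Import all_boot all_order all_algebra.
From mathcomp Require Import ring zify.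
From Stdlib Require Import Classical.

Set Implicit Arguments. Unset Strict Implicit. Unset Printing Implicit Defensive.
Import Order.TTheory GRing.Theory.
Local Open Scope ring_scope.

Section FormalSums.
Variables (K : fieldType) (A : eqType).
Local Notation tp := (tpoly K A).
Implicit Types (p q : tp) (u v w : seq A).

Lemma coef_nil w : coef ([::] : tp) w = 0.
Proof. by rewrite /coef big_nil. Qed.

Lemma coef_tcons (c : K * seq A) p w :
  coef (c :: p) w = (if c.2 == w then c.1 else 0) + coef p w.
Proof. by rewrite /coef big_cons. Qed.

Lemma coef_cat p q w : coef (p ++ q) w = coef p w + coef q w.
Proof. by rewrite /coef big_cat. Qed.

Lemma coef_scale c p w : coef (tscale c p) w = c * coef p w.
Proof.
rewrite /coef big_map mulr_sumr; apply: eq_bigr => cw _ /=.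
by case: ifP; rewrite ?mulr0.
Qed.

Lemma coef_tsub p q w : coef (tsub p q) w = coef p w - coef q w.
Proof. by rewrite /tsub coef_cat coef_scale mulN1r. Qed.

Lemma coef_tword u w : coef (tword K u) w = if u == w then 1 else 0.
Proof. by rewrite /coef big_cons big_nil addr0. Qed.

Lemma coef_flatten (l : seq tp) w : coef (flatten l) w = \sum_(p <- l) coef p w.
Proof.
elim: l => [|p l IH]; first by rewrite big_nil coef_nil.
by rewrite /= coef_cat IH big_cons.
Qed.

Definition wmap (f : seq A -> seq A) p : tp := [seq (c.1, f c.2) | c <- p].

Lemma wmap_cat f p q : wmap f (p ++ q) = wmap f p ++ wmap f q.
Proof. by rewrite /wmap map_cat. Qed.

Lemma coef_wmap f p p' : injective f -> coef p =1 coef p' ->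
  coef (wmap f p) =1 coef (wmap f p').
Proof.
move=> f_inj E z; rewrite /coef !big_map.
have [[y <-]|not_img] := classic (exists y, f y = z).
  by under eq_bigr => c _ do rewrite /= (inj_eq f_inj);
     under [RHS]eq_bigr => c _ do rewrite /= (inj_eq f_inj); exact: E.
rewrite !big1 // => c _ /=; case: eqP => // fc; case: not_img; by exists c.2.
Qed.

Lemma catl_inj u : injective (cat u).
Proof. by elim: u => // a u IH w w' [/IH]. Qed.

Lemma catr_inj v : injective (cat^~ v).
Proof.
by move=> w w' /(congr1 rev); rewrite !rev_cat => /catl_inj /(congr1 rev); rewrite !revK.
Qed.

Definition ctx u v w := u ++ w ++ v.

Lemma ctx_inj u v : injective (ctx u v).
Proof. by move=> w w' /catl_inj /catr_inj. Qed.

Lemma tmul_wordsE c u g v :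
  tmul (tmul (tscale c (tword K u)) g) (tword K v) = tscale c (wmap (ctx u v) g).
Proof.
rewrite /tmul /tscale /tword /wmap /= cats0.
by elim: g => //= cw g ->; rewrite !mulr1 /ctx catA.
Qed.

Lemma coef_tmul_l p q w :
  coef (tmul p q) w = \sum_(a <- p) a.1 * coef (wmap (cat a.2) q) w.
Proof.
rewrite /coef /tmul big_allpairs_dep; apply: eq_bigr => a _.
rewrite big_map mulr_sumr; apply: eq_bigr => b _ /=.
by case: ifP; rewrite ?mulr0.
Qed.

Lemma coef_tmul_r p q w :
  coef (tmul p q) w = \sum_(b <- q) b.1 * coef (wmap (cat^~ b.2) p) w.
Proof.
rewrite /coef /tmul big_allpairs_dep exchange_big; apply: eq_bigr => b _.
rewrite big_map mulr_sumr; apply: eq_bigr => a _ /=.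
by case: ifP; rewrite ?mulr0 // mulrC.
Qed.

Lemma coef_tmul_congr p p' q q' : coef p =1 coef p' -> coef q =1 coef q' ->
  coef (tmul p q) =1 coef (tmul p' q').
Proof.
move=> Ep Eq w; rewrite coef_tmul_r.
under eq_bigr => b _ do rewrite (coef_wmap (@catr_inj b.2) Ep).
rewrite -coef_tmul_r coef_tmul_l [RHS]coef_tmul_l.
by apply: eq_bigr => a _; rewrite (coef_wmap (@catl_inj a.2) Eq).
Qed.

Lemma coef_cat_congr p p' q q' : coef p =1 coef p' -> coef q =1 coef q' ->
  coef (p ++ q) =1 coef (p' ++ q').
Proof. by move=> Ep Eq w; rewrite !coef_cat Ep Eq. Qed.

Lemma coef_scale_congr c p p' : coef p =1 coef p' ->
  coef (tscale c p) =1 coef (tscale c p').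
Proof. by move=> E w; rewrite !coef_scale E. Qed.

Variable G : tp -> Prop.
Local Notation ideal := (in_ideal G).

Lemma ideal_coef p p' : ideal p -> coef p =1 coef p' -> ideal p'.
Proof. by case=> s [Gs E] E'; exists s; split => // w; rewrite -E'. Qed.

Lemma ideal_nil : ideal [::].
Proof. by exists [::]. Qed.

Lemma ideal_add p q : ideal p -> ideal q -> ideal (p ++ q).
Proof.
case=> s1 [G1 E1] [s2 [G2 E2]]; exists (s1 ++ s2); split.
  by move=> t; rewrite mem_cat => /orP[]; [apply: G1|apply: G2].
by move=> w; rewrite map_cat flatten_cat !coef_cat E1 E2.
Qed.

Lemma ideal_scale c p : ideal p -> ideal (tscale c p).
Proof.
case=> s [Gs E]; exists [seq ((c * t.1.1.1, t.1.1.2), t.1.2, t.2) | t <- s]; split.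
  by move=> t /mapP[t' t'_in ->]; exact: (Gs _ t'_in).
move=> w; rewrite coef_scale E !coef_flatten !big_map mulr_sumr.
by apply: eq_bigr => t _; rewrite !tmul_wordsE !coef_scale /= mulrA.
Qed.

Lemma ideal_gen c u v g : G g -> ideal (tscale c (wmap (ctx u v) g)).
Proof.
by move=> Gg; exists [:: ((c, u), g, v)]; split=> [t /[!inE]/eqP->|w] //=;
   rewrite cats0 tmul_wordsE.
Qed.

Definition cong p q := ideal (tsub p q).

Lemma cong_coef p q : coef p =1 coef q -> cong p q.
Proof.
by move=> E; apply: (ideal_coef ideal_nil) => w; rewrite coef_nil coef_tsub E subrr.
Qed.

Lemma cong_trans p q r : cong p q -> cong q r -> cong p r.
Proof.
move=> Hpq Hqr; apply: (ideal_coef (ideal_add Hpq Hqr)) => w.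
by rewrite coef_cat !coef_tsub addrA subrK.
Qed.

Lemma cong_add p p' q q' : cong p p' -> cong q q' -> cong (p ++ q) (p' ++ q').
Proof.
move=> Hp Hq; apply: (ideal_coef (ideal_add Hp Hq)) => w.
by rewrite !(coef_cat, coef_tsub); ring.
Qed.

Lemma cong_scale c p p' : cong p p' -> cong (tscale c p) (tscale c p').
Proof.
move=> H; apply: (ideal_coef (ideal_scale c H)) => w.
by rewrite !(coef_scale, coef_tsub); ring.
Qed.

Definition spanned (M : seq A -> Prop) p :=
  exists g : tp, (forall cw, cw \in g -> M cw.2) /\ cong p g.

Section Spanned.
Variable M : seq A -> Prop.

Lemma spanned_cong p p' : cong p p' -> spanned M p' -> spanned M p.
Proof. by move=> E [g [Mg E']]; exists g; split => //; apply: cong_trans E E'. Qed.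

Lemma spanned_add p q : spanned M p -> spanned M q -> spanned M (p ++ q).
Proof.
move=> [g1 [M1 E1]] [g2 [M2 E2]]; exists (g1 ++ g2); split; last exact: cong_add.
by move=> cw; rewrite mem_cat => /orP[]; [apply: M1|apply: M2].
Qed.

Lemma spanned_scale c p : spanned M p -> spanned M (tscale c p).
Proof.
move=> [g [Mg E]]; exists (tscale c g); split; last exact: cong_scale.
by move=> cw /mapP[cw' cw'_in ->]; exact: (Mg _ cw'_in).
Qed.

Lemma spanned_word w : M w -> spanned M (tword K w).
Proof.
move=> Mw; exists (tword K w); split; last exact: cong_coef.
by move=> cw /[!inE]/eqP->.
Qed.

Lemma spanned_sum p : (forall c, c \in p -> spanned M (tword K c.2)) -> spanned M p.
Proof.
elim: p => [|c p IH] Mp.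
  by exists [::]; split => //; apply: cong_coef.
apply: (@spanned_cong _ (tscale c.1 (tword K c.2) ++ p)).
  apply: cong_coef => w; rewrite coef_tcons coef_cat coef_scale coef_tword.
  by case: ifP; rewrite ?mulr1 ?mulr0.
apply: spanned_add; first by apply/spanned_scale/Mp; rewrite inE eqxx.
by apply: IH => c' c'_in; apply: Mp; rewrite inE c'_in orbT.
Qed.
End Spanned.
End FormalSums.

Section SortBySwaps.
Variables (d : Order.disp_t) (J : orderType d).

(* A property of sequences that is transported backwards along every
   adjacent transposition can be checked on a sorted rearrangement. *)
Definition swap_closed (P : seq J -> Prop) :=
  forall s1 s2 i j, P (s1 ++ j :: i :: s2) -> P (s1 ++ i :: j :: s2).

Lemma insert_by_swaps (P : seq J -> Prop) a w : swap_closed P -> jsorted w ->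
  exists2 w', jsorted w' & perm_eq (a :: w) w' /\ (P w' -> P (a :: w)).
Proof.
elim: w P => [|b w IH] P swapP sorted_w; first by exists [:: a].
have [le_ab|lt_ba] := leP a b; first by exists [:: a, b & w] => //=; rewrite le_ab.
have [w' sorted_w' [perm_w' Pw']] :=
  IH (fun s => P (b :: s)) (fun s1 => swapP (b :: s1)) (path_sorted sorted_w).
exists (b :: w'); last split.
- rewrite /jsorted /= path_min_sorted // -(perm_all _ perm_w') /= (ltW lt_ba).
  exact: order_path_min le_trans sorted_w.
- by rewrite (perm_catCA [:: a] [:: b] w) /= perm_cons.
- by move=> /Pw'; apply: (swapP [::]).
Qed.

Lemma sort_by_swaps (P : seq J -> Prop) v : swap_closed P ->
  exists2 v', jsorted v' & perm_eq v v' /\ (P v' -> P v).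
Proof.
elim: v P => [|a v IH] P swapP; first by exists [::].
have [v' sorted_v' [perm_v' Pv']] := IH (fun s => P (a :: s)) (fun s1 => swapP (a :: s1)).
have [w' sorted_w' [perm_w' Pw']] := insert_by_swaps a swapP sorted_v'.
exists w' => //; split; last by move=> /Pw' /Pv'.
by apply: perm_trans perm_w'; rewrite perm_cons.
Qed.
End SortBySwaps.

Lemma first_q (A : eqType) (w : seq (option A)) :
  None \in w -> exists u r, w = map Some u ++ None :: r.
Proof.
elim: w => // -[j|] w IH /=; last by exists [::], w.
by rewrite inE /= => /IH[u [r ->]]; exists (j :: u), r.
Qed.

Lemma q_free (A : eqType) (w : seq (option A)) :
  None \notin w -> exists v, w = map Some v.
Proof.
elim: w => [|[j|] w IH]; [by exists [::]| |by rewrite inE eqxx].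
by rewrite inE /= => /IH[v ->]; exists (j :: v).
Qed.

Section Straightening.
Variables (K : fieldType) (d : Order.disp_t) (J : orderType d)
  (L : lmodType K) (br : L -> L -> L) (x : J -> L) (kappa : K)
  (hat : L -> tpoly K (option J)).
Hypothesis x_span : forall y : L, exists s, y = lincomb x s.
Hypothesis kappa_neq0 : kappa != 0.
Hypothesis hat_lincomb : forall s : seq (K * J),
  coef (hat (lincomb x s)) =1 coef [seq (p.1, [:: Some p.2]) | p <- s].

Local Notation word := (seq (option J)).
Local Notation tp := (tpoly K (option J)).
Implicit Types (l r a : word) (s : seq (K * J)).

(* The element of T(V) given by a single word; it is kept opaque so that
   rewriting inside words never unfolds it into a list of pairs. *)
Fact word_key : unit. Proof. by []. Qed.
Definition W (w : word) : tp := locked_with word_key (tword K w).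
Lemma WE w : W w = tword K w. Proof. by rewrite /W unlock. Qed.

Definition rel_gens (g : tp) := I_gens g \/ R_gens br hat kappa g.
Local Notation ideal := (in_ideal rel_gens).
Local Notation cong := (cong rel_gens).

Definition lin_at l s r : tp := [seq (p.1, l ++ Some p.2 :: r) | p <- s].

Lemma coef_lin_at_cons l p s r w : coef (lin_at l (p :: s) r) w =
  p.1 * coef (W (l ++ Some p.2 :: r)) w + coef (lin_at l s r) w.
Proof. by rewrite coef_tcons WE coef_tword; case: ifP; rewrite ?mulr1 ?mulr0. Qed.

Lemma q_absorb l a r : cong (W (l ++ None :: a ++ None :: r)) (W (l ++ None :: a ++ r)).
Proof.
pose Q := @qt K d J.
have Ig : rel_gens (tsub (tmul (tmul Q (tword K a)) Q) (tmul Q (tword K a))).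
  by left; right; exists (tword K a).
apply: (ideal_coef (ideal_gen 1 l r Ig)) => w.
by rewrite !WE /= !(coef_tcons, coef_nil) /= /ctx /= -!catA /= !mul1r !mulr1.
Qed.

(* The generator of R for the basis vectors x_i, x_j, in the context l _ r,
   with [x_i, x_j] = lincomb x s. *)
Definition rel_word l r i j s : tp :=
  lin_at l s r ++ tscale (-1) (W (l ++ [:: Some i, Some j & r])) ++
  W (l ++ [:: Some j, Some i & r]) ++ W (l ++ [:: Some i, Some j, None & r]) ++
  tscale (-1) (W (l ++ [:: Some j, Some i, None & r])) ++
  tscale (- kappa) (W (l ++ [:: Some i, None, Some j & r])) ++
  tscale kappa (W (l ++ [:: Some j, None, Some i & r])).

Lemma hat_basis i : coef (hat (x i)) =1 coef (W [:: Some i]).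
Proof.
have -> : x i = lincomb x [:: (1, i)] by rewrite /lincomb big_seq1 scale1r.
by move=> w; rewrite hat_lincomb WE.
Qed.

(* [rel_word] lies in the ideal: replace the lifts of x_i, x_j, [x_i, x_j]
   in a generator of R by their word expansions. *)
Lemma rel_word_ideal l r i j s : br (x i) (x j) = lincomb x s ->
  ideal (rel_word l r i j s).
Proof.
move=> bracket_ij.
set Q := @qt K d J.
pose gen X Y B : tp := tadd (tadd (tadd (tadd (tadd (tadd B
    (tscale (-1) (tmul X Y))) (tmul Y X)) (tmul (tmul X Y) Q))
    (tscale (-1) (tmul (tmul Y X) Q))) (tscale (- kappa) (tmul (tmul X Q) Y)))
    (tscale kappa (tmul (tmul Y Q) X)).
have Rg : rel_gens (gen (hat (x i)) (hat (x j)) (hat (br (x i) (x j)))).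
  by right; exists (x i), (x j).
have gen_words : coef (gen (hat (x i)) (hat (x j)) (hat (br (x i) (x j)))) =1
                 coef (gen (W [:: Some i]) (W [:: Some j]) (lin_at [::] s [::])).
  have [hi hj] := (hat_basis i, hat_basis j).
  have hb : coef (hat (br (x i) (x j))) =1 coef (lin_at [::] s [::]).
    by rewrite bracket_ij; exact: hat_lincomb.
  by rewrite /gen /tadd; repeat (apply: coef_cat_congr || apply: coef_scale_congr
     || apply: coef_tmul_congr || done).
apply: (ideal_coef (ideal_gen 1 l r Rg)) => w.
rewrite coef_scale mul1r (coef_wmap (@ctx_inj _ l r) gen_words) /gen /tadd !wmap_cat.
have -> : wmap (ctx l r) (lin_at [::] s [::]) = lin_at l s r.
  by rewrite /wmap /lin_at -map_comp; apply: eq_map => p; rewrite /ctx.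
rewrite /rel_word !WE /= !(coef_tcons, coef_nil, coef_cat) /= /ctx /= -?catA /=.
by rewrite !mul1r !mulr1; ring.
Qed.

(* Right multiplication of R by q, simplified with q x q = q x and qq = q:
   x_i q x_j = x_j q x_i + kappa^-1 [x_i, x_j] q. *)
Lemma swap_across_q l r i j s : br (x i) (x j) = lincomb x s ->
  cong (W (l ++ [:: Some i, None, Some j & r]))
       (W (l ++ [:: Some j, None, Some i & r]) ++
        tscale kappa^-1 (lin_at l s (None :: r))).
Proof.
move=> bracket_ij.
have R0 := rel_word_ideal l (None :: r) bracket_ij.
have Q1 := q_absorb (l ++ [:: Some i; Some j]) [::] r.
have Q2 := q_absorb (l ++ [:: Some j; Some i]) [::] r.
have Q3 := q_absorb (l ++ [:: Some i]) [:: Some j] r.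
have Q4 := q_absorb (l ++ [:: Some j]) [:: Some i] r.
rewrite -?catA /= in Q1 Q2 Q3 Q4.
(* The difference is -kappa^-1 times: R q, corrected by the absorptions
   x x q q = x x q and, with weight kappa, x q x q = x q x. *)
apply: (ideal_coef (ideal_scale (- kappa^-1) (ideal_add R0
   (ideal_add (ideal_scale (-1) Q1) (ideal_add Q2
   (ideal_add (ideal_scale kappa Q3) (ideal_scale (- kappa) Q4))))))).
by move=> w; rewrite /rel_word ?(coef_cat, coef_scale, coef_tsub); field.
Qed.

(* R combined with [swap_across_q]: a transposition of two letters costs
   a bracket term and terms containing q. *)
Lemma swap_letters l r i j s : br (x i) (x j) = lincomb x s ->
  cong (W (l ++ [:: Some i, Some j & r]))
       (W (l ++ [:: Some j, Some i & r]) ++ lin_at l s r ++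
        W (l ++ [:: Some i, Some j, None & r]) ++
        tscale (-1) (W (l ++ [:: Some j, Some i, None & r])) ++
        tscale (-1) (lin_at l s (None :: r))).
Proof.
move=> bracket_ij.
have R0 := rel_word_ideal l r bracket_ij.
have S1 := swap_across_q l r bracket_ij.
apply: (ideal_coef (ideal_add (ideal_scale (-1) R0) (ideal_scale (- kappa) S1))).
by move=> w; rewrite /rel_word ?(coef_cat, coef_scale, coef_tsub); field.
Qed.

Lemma lin_at_q_absorb l a s r :
  cong (lin_at (l ++ None :: a) s (None :: r)) (lin_at (l ++ None :: a) s r).
Proof.
elim: s => [|p s IH]; first exact: cong_coef.
have Q := q_absorb l (a ++ [:: Some p.2]) r; rewrite -?catA /= in Q.
apply: (ideal_coef (ideal_add (ideal_scale p.1 Q) IH)) => w.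
by rewrite ?(coef_cat, coef_scale, coef_tsub) !coef_lin_at_cons -?catA /=; ring.
Qed.

Lemma swap_after_q l r i j s : None \in l -> br (x i) (x j) = lincomb x s ->
  cong (W (l ++ [:: Some i, Some j & r]))
       (W (l ++ [:: Some j, Some i & r]) ++ tscale kappa^-1 (lin_at l s r)).
Proof.
case/splitPr=> u a bracket_ij.
have S0 := swap_across_q (u ++ None :: a) r bracket_ij.
have Q1 := q_absorb u (a ++ [:: Some i]) (Some j :: r).
have Q2 := q_absorb u (a ++ [:: Some j]) (Some i :: r).
have Q3 := lin_at_q_absorb u a s r.
rewrite -?catA ?cat_cons ?cat0s in S0 Q1 Q2 *.
apply: (ideal_coef (ideal_add S0 (ideal_add (ideal_scale (-1) Q1)
   (ideal_add Q2 (ideal_scale kappa^-1 Q3))))).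
by move=> w; rewrite ?(coef_cat, coef_scale, coef_tsub); field.
Qed.

Local Notation reducible := (spanned rel_gens (@model_word d J)).

Lemma reducible_model w : model_word w -> reducible (W w).
Proof. by rewrite WE; apply: spanned_word. Qed.

Lemma reducible_lin_at l s r :
  (forall y, reducible (W (l ++ Some y :: r))) -> reducible (lin_at l s r).
Proof. by move=> red; apply: spanned_sum => c /mapP[p _ ->]; rewrite -WE; apply: red. Qed.

Ltac size_lia :=
  repeat progress rewrite ?size_cat ?size_map /=;
  repeat match goal with |- context [size ?s] =>
    let k := fresh "k" in set k := size s; clearbody k end;
  lia.

Section WordsWithQ.
Variable n : nat.
Hypothesis reducible_shorter :
  forall w, (size w < n)%N -> None \in w -> reducible (W w).

(* Bracket terms produced by a transposition are one letter shorter. *)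
Lemma reducible_lin_at_shorter l s r :
  ((size (l ++ r)).+1 < n)%N -> None \in l ++ r -> reducible (lin_at l s r).
Proof.
move=> size_lr q_in_lr; apply: reducible_lin_at => y; apply: reducible_shorter.
  by move: size_lr; size_lia.
by move: q_in_lr; rewrite !mem_cat inE => /orP[] ->; rewrite ?orbT.
Qed.

Lemma sort_after_q l v : None \in l -> size (l ++ map Some v) = n ->
  exists2 v', jsorted v' & perm_eq v v' /\
    (reducible (W (l ++ map Some v')) -> reducible (W (l ++ map Some v))).
Proof.
move=> q_in_l size_w.
pose P u := size u = size v -> reducible (W (l ++ map Some u)).
have [|v' sorted_v' [perm_v' Pv']] := @sort_by_swaps _ _ P v.
  move=> s1 s2 i j P_swapped size_s; have [s bracket_ij] := x_span (br (x i) (x j)).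
  have q_in : None \in l ++ map Some s1 by rewrite mem_cat q_in_l.
  have := swap_after_q (map Some s2) q_in bracket_ij.
  rewrite map_cat /= -!catA => /spanned_cong; apply.
  apply: spanned_add.
    by move: P_swapped; rewrite /P map_cat /=; apply; rewrite -size_s !size_cat.
  apply/spanned_scale/reducible_lin_at_shorter; last by rewrite !mem_cat q_in_l.
  by move: size_w size_s; size_lia.
by exists v' => //; split => // red_v'; apply: Pv'.
Qed.

(* With both blocks sorted, x_{j0} q x_y with y < j0 is rewritten as
   x_y q x_{j0} plus a shorter term, which yields a model monomial (b). *)
Lemma move_min_across_q u j0 v : jsorted u -> jsorted v ->
  size (map Some u ++ Some j0 :: None :: map Some v) = n ->
  reducible (W (map Some u ++ Some j0 :: None :: map Some v)).
Proof.
move=> sorted_u; case: v => [|y v] sorted_yv size_w.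
  by apply: reducible_model; right; left; exists u, j0, [::].
have [le_j0y|lt_yj0] := leP j0 y.
  apply: reducible_model; right; left; exists u, j0, (y :: v).
  by rewrite /jsorted /= le_j0y.
have [s bracket] := x_span (br (x j0) (x y)).
apply: spanned_cong (swap_across_q (map Some u) (map Some v) bracket) _.
apply: spanned_add.
  have q_in : None \in map Some u ++ [:: Some y; None] by rewrite mem_cat !inE orbT.
  have size_w' : size ((map Some u ++ [:: Some y; None]) ++ map Some (j0 :: v)) = n.
    by move: size_w; size_lia.
  have [v' sorted_v' [perm_v' back]] := sort_after_q q_in size_w'.
  move: back; rewrite -!catA /=; apply.
  apply: reducible_model; right; left; exists u, y, v'; split => //; split => //.
  rewrite /jsorted /= path_min_sorted // -(perm_all _ perm_v') /= (ltW lt_yj0).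
  exact: order_path_min le_trans sorted_yv.
apply/spanned_scale/reducible_lin_at_shorter; last by rewrite mem_cat !inE orbT.
by move: size_w; size_lia.
Qed.

Variable p : nat.
Hypothesis reducible_earlier_q : forall u r, (size u < p)%N ->
  size (map Some u ++ None :: r) = n -> reducible (W (map Some u ++ None :: r)).

(* The letters before the one preceding the first q can be sorted: a
   transposition there costs terms that are shorter, or that contain an
   earlier q once a later q has been absorbed. *)
Lemma sort_before_q u j0 v : (size u < p)%N ->
  size (map Some u ++ Some j0 :: None :: map Some v) = n ->
  exists2 u', jsorted u' & perm_eq u u' /\
    (reducible (W (map Some u' ++ Some j0 :: None :: map Some v)) ->
     reducible (W (map Some u ++ Some j0 :: None :: map Some v))).
Proof.
move=> size_u size_w; set tl := Some j0 :: None :: map Some v.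
pose P u' := size u' = size u -> reducible (W (map Some u' ++ tl)).
have [|u' sorted_u' [perm_u' Pu']] := @sort_by_swaps _ _ P u; last first.
  by exists u' => //; split => // red_u'; apply: Pu'.
move=> s1 s2 i j P_swapped size_s; have [s bracket_ij] := x_span (br (x i) (x j)).
have size_n : (size s1 + size s2 + size v).+4 = n.
  by move: size_w size_s; size_lia.
have absorb k1 k2 :
    reducible (W (map Some s1 ++ [:: Some k1, Some k2, None & map Some s2 ++ tl])).
  have := q_absorb (map Some s1 ++ [:: Some k1; Some k2])
                   (map Some s2 ++ [:: Some j0]) (map Some v).
  rewrite -!catA /= => /spanned_cong; apply.
  have := reducible_earlier_q (u := s1 ++ [:: k1; k2])
                              (r := map Some s2 ++ Some j0 :: map Some v).
  rewrite map_cat -catA /=; apply.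
    by move: size_u; rewrite -size_s; size_lia.
  by move: size_n; size_lia.
have := swap_letters (map Some s1) (map Some s2 ++ tl) bracket_ij.
rewrite map_cat -catA /= => /spanned_cong; apply.
apply: spanned_add.
  by move: P_swapped; rewrite /P map_cat -catA /=; apply; rewrite -size_s !size_cat.
apply: spanned_add.
  apply: reducible_lin_at_shorter; last by rewrite /tl !(mem_cat, inE) eqxx !orbT.
  by move: size_n; rewrite /tl; size_lia.
apply: spanned_add; first exact: absorb.
apply: spanned_add; first exact/spanned_scale/absorb.
apply/spanned_scale/reducible_lin_at => y.
have := q_absorb (map Some s1 ++ [:: Some y])
                 (map Some s2 ++ [:: Some j0]) (map Some v).
rewrite -!catA /= => /spanned_cong; apply; apply: reducible_shorter.
  by move: size_n; size_lia.
by rewrite !(mem_cat, inE) eqxx !orbT.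
Qed.

(* A word whose first q is at position [p] is reducible: absorb a later q
   if there is one; otherwise sort the letters after q, then those before
   the letter preceding q, and finish with [move_min_across_q]. *)
Lemma reducible_first_q u r : size u = p ->
  size (map Some u ++ None :: r) = n -> reducible (W (map Some u ++ None :: r)).
Proof.
move=> size_u size_w.
have [q_in_r|q_free_r] := boolP (None \in r).
  case/splitPr: q_in_r size_w => a b size_w.
  apply: spanned_cong (q_absorb (map Some u) a b) _; apply: reducible_shorter.
    by move: size_w; size_lia.
  by rewrite mem_cat inE eqxx orbT.
have [v r_eq] := q_free q_free_r; subst r.
have q_in : None \in map Some u ++ [:: None] by rewrite mem_cat inE eqxx orbT.
have size_w' : size ((map Some u ++ [:: None]) ++ map Some v) = n by rewrite -catA.
have [v' sorted_v' [perm_v' back]] := sort_after_q q_in size_w'.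
move: back; rewrite -!catA /=; apply.
have {size_w'}size_w : size (map Some u ++ None :: map Some v') = n.
  by rewrite -size_w !size_cat /= !size_map (perm_size perm_v').
case/lastP: u size_u size_w {q_in} => [|u j0] size_u size_w.
  by apply: reducible_model; left; exists v'.
rewrite map_rcons -cats1 -catA /= in size_w *.
have size_u' : (size u < p)%N by rewrite -size_u size_rcons.
have [u' sorted_u' [perm_u' back]] := sort_before_q size_u' size_w.
apply: back; apply: move_min_across_q => //.
by rewrite -size_w !size_cat !size_map (perm_size perm_u').
Qed.

End WordsWithQ.

(* Every word containing q is reducible, by induction on the length and
   then on the position of the first q. *)
Lemma reducible_q_word w : None \in w -> reducible (W w).
Proof.
move: {2}(size w) (erefl (size w)) => n; elim/ltn_ind: n w => n IHn w size_w q_in_w.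
have [u [r w_eq]] := first_q q_in_w; subst w.
move: {2}(size u) (erefl (size u)) => p.
elim/ltn_ind: p u r size_w {q_in_w} => p IHp u r size_w size_u.
have shorter w' : (size w' < n)%N -> None \in w' -> reducible (W w').
  by move=> size_w'; apply: IHn size_w' w' erefl.
have earlier u' r' : (size u' < p)%N -> size (map Some u' ++ None :: r') = n ->
    reducible (W (map Some u' ++ None :: r')).
  by move=> size_u' size_w'; apply: IHp size_u' u' r' size_w' erefl.
by have := reducible_first_q shorter earlier; apply.
Qed.

(* A word without q is sorted by [swap_letters]; the correction terms are
   shorter or contain q. *)
Lemma reducible_q_free v : reducible (W (map Some v)).
Proof.
move: {2}(size v) (erefl (size v)) => n; elim/ltn_ind: n v => n IHn v size_v.
pose P u := size u = size v -> reducible (W (map Some u)).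
have [|v' sorted_v' [perm_v' Pv']] := @sort_by_swaps _ _ P v; last first.
  apply: Pv' => // _; apply: reducible_model; right; right; by exists v'.
move=> s1 s2 i j P_swapped size_s; have [s bracket_ij] := x_span (br (x i) (x j)).
have q_word l a r : reducible (W (l ++ a ++ None :: r)).
  by apply: reducible_q_word; rewrite !(mem_cat, inE) eqxx !orbT.
have := swap_letters (map Some s1) (map Some s2) bracket_ij.
rewrite map_cat /= => /spanned_cong; apply.
apply: spanned_add.
  by move: P_swapped; rewrite /P map_cat /=; apply; rewrite -size_s !size_cat.
apply: spanned_add.
  apply: reducible_lin_at => y; rewrite -map_cons -map_cat.
  by apply: IHn erefl; move: size_v size_s; size_lia.
apply: spanned_add; first exact: (q_word _ [:: Some i; Some j]).
apply: spanned_add; first exact/spanned_scale/(q_word _ [:: Some j; Some i]).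
by apply/spanned_scale/reducible_lin_at => y; apply: (q_word _ [:: Some y]).
Qed.

Lemma reducible_word w : reducible (W w).
Proof.
have [|/q_free[v ->]] := boolP (None \in w); first exact: reducible_q_word.
exact: reducible_q_free.
Qed.

Lemma reducible_all f : reducible f.
Proof. by apply: spanned_sum => c _; rewrite -WE; apply: reducible_word. Qed.

End Straightening.

Unset Implicit Arguments.
Theorem proposition5p1 (K : fieldType) (d : Order.disp_t) (J : orderType d)
  (L : lmodType K) (br : L -> L -> L) (x : J -> L) (kappa : K)
  (hat : L -> tpoly K (option J)) :
  is_lie_bracket br ->
  is_basis x ->
  kappa != 0 ->
  (forall s : seq (K * J),
      coef (hat (lincomb x s)) =1 coef [seq (p.1, [:: Some p.2]) | p <- s]) ->
  forall f : tpoly K (option J),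
    exists g : tpoly K (option J),
      (forall cw, cw \in g -> model_word cw.2) /\
      in_ideal (fun r => I_gens r \/ R_gens br hat kappa r) (tsub f g).
Proof.
move=> _ [_ x_span] kappa_neq0 hat_lincomb f.
exact: reducible_all x_span kappa_neq0 hat_lincomb f.
Qed.
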